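(* Let $\mathcal{C}\le\mathbb{F}_q^n$ be a linear code with $q\neq 2$, and assume every codeword of $\mathcal{C}$ has even weight. Let $c\in\mathcal{C}$ be a codeword of weight $2$ with support $\{i,j\}$, and let $x\in\mathcal{C}$ be arbitrary. Then there exists $\lambda\in\mathbb{F}_q$ such that $(x_i,x_j)=(\lambda c_i,\lambda c_j)$.
   Context: The support of $c\in\mathbb{F}_q^n$ is $\{k: c_k\neq 0\}$ and its weight is the size of its support. *)

From HB Require Import structures.
From mathcomp Require Import all_boot all_order all_algebra.
Set Implicit Arguments. Unset Strict Implicit. Unset Printing Implicit Defensive.
Import GRing.Theory.
Local Open Scope ring_scope.

(* Vectors of F_q^n are row vectors 'rV[F]_n; a linear code is a subspace
   C : {vspace 'rV[F]_n}. *)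
Definition supp (F : finFieldType) (n : nat) (c : 'rV[F]_n) : {set 'I_n} :=
  [set k | c ord0 k != 0].
Definition weight (F : finFieldType) (n : nat) (c : 'rV[F]_n) : nat :=
  #|supp c|.

From HB Require Import structures.
From mathcomp Require Import all_boot all_order all_algebra.
Import GRing.Theory.
Local Open Scope ring_scope.

(* Subtract from x the multiple of c that kills its i-th coordinate; call the
   result y.  If y_j were nonzero, then since q > 2 there is a scalar mu that is
   neither 0 nor -y_j/c_j, and y + mu c is a codeword whose support is that of y
   plus the single new position i: its weight is odd, a contradiction.  Hence
   y_j = 0 too, i.e. x agrees with a multiple of c on {i, j}. *)

Lemma exists_neq2 [T : finType] (a b : T) :
  (2 < #|T|)%N -> exists x : T, (x != a) && (x != b).
Proof.
move=> T_gt2; have : (0 < #|~: [set a; b]|)%N.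
  rewrite cardsCs setCK subn_gt0 (leq_ltn_trans _ T_gt2) // cards2.
  by case: (_ != _).
by case/card_gt0P=> x; rewrite !inE negb_or; exists x.
Qed.

Lemma card_finField_gt2 [F : finFieldType] : #|F| != 2%N -> (2 < #|F|)%N.
Proof.
by move=> F_neq2; rewrite ltn_neqAle eq_sym F_neq2 card_finNzRing_gt1.
Qed.

Section Support.

Context {F : finFieldType} {n : nat}.
Implicit Types (c y : 'rV[F]_n) (i j k : 'I_n).

Lemma mem_supp c k : (k \in supp c) = (c ord0 k != 0).
Proof. by rewrite inE. Qed.

Lemma supp_scale (a : F) c : a != 0 -> supp (a *: c) = supp c.
Proof.
by move=> a0; apply/setP=> k; rewrite !mem_supp mxE mulf_eq0 negb_or a0.
Qed.

Lemma supp_add_pair [y c i j] :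
    supp c = [set i; j] -> y ord0 i = 0 -> y ord0 j != 0 ->
    y ord0 j + c ord0 j != 0 ->
  supp (y + c) = i |: supp y.
Proof.
move=> supp_c yi0 yj0 yjc0; apply/setP=> k; rewrite !inE mxE.
have c_neq0 k' : (c ord0 k' != 0) = (k' \in [set i; j]).
  by rewrite -supp_c mem_supp.
have [->|ki] := eqVneq k i; first by rewrite yi0 add0r c_neq0 !inE eqxx.
have [->|kj] := eqVneq k j; first by rewrite yjc0 yj0.
move: (c_neq0 k); rewrite !inE (negbTE ki) (negbTE kj) => /negbFE/eqP->.
by rewrite addr0.
Qed.

Lemma weight_add_pair [y c i j] :
    supp c = [set i; j] -> y ord0 i = 0 -> y ord0 j != 0 ->
    y ord0 j + c ord0 j != 0 ->
  weight (y + c) = (weight y).+1.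
Proof.
move=> supp_c yi0 yj0 yjc0; rewrite /weight (supp_add_pair supp_c yi0 yj0 yjc0).
by rewrite cardsU1 mem_supp yi0 eqxx.
Qed.

End Support.

Section EvenCode.

Context {F : finFieldType} {n : nat} {C : {vspace 'rV[F]_n}}.
Hypothesis F_neq2 : #|F| != 2%N.
Hypothesis C_even : forall x : 'rV[F]_n, x \in C -> ~~ odd (weight x).

Lemma even_code_pair_vanish [c y : 'rV[F]_n] [i j : 'I_n] :
    c \in C -> supp c = [set i; j] -> y \in C -> y ord0 i = 0 ->
  y ord0 j = 0.
Proof.
move=> cC supp_c yC yi0; apply/eqP/negPn/negP => yj0.
have cj0 : c ord0 j != 0 by rewrite -mem_supp supp_c !inE eqxx orbT.
have [mu /andP[mu0 mu_neq]] := exists_neq2 0 (- y ord0 j / c ord0 j)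
  (card_finField_gt2 F_neq2).
have supp_muc : supp (mu *: c) = [set i; j] by rewrite supp_scale.
have yj_muc0 : y ord0 j + (mu *: c) ord0 j != 0.
  apply: contra mu_neq; rewrite mxE addrC addr_eq0 => /eqP mucj.
  by rewrite -mucj mulfK.
have := C_even _ (memvD yC (memvZ mu cC)).
by rewrite (weight_add_pair supp_muc yi0 yj0 yj_muc0) /= (C_even _ yC).
Qed.

End EvenCode.

Theorem lemma3p1 (F : finFieldType) (n : nat) (C : {vspace 'rV[F]_n})
  (hq : #|F| != 2%N)
  (heven : forall x : 'rV[F]_n, x \in C -> ~~ odd (weight x))
  (c : 'rV[F]_n) (i j : 'I_n)
  (hc : c \in C) (hw : weight c = 2%N) (hsupp : supp c = ([set i; j] : {set 'I_n}))
  (x : 'rV[F]_n) (hx : x \in C) :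
  exists lambda : F, x ord0 i = lambda * c ord0 i /\ x ord0 j = lambda * c ord0 j.
Proof.
(* [hw] is redundant: [hsupp] already fixes the support. *)
have ci0 : c ord0 i != 0 by rewrite -mem_supp hsupp !inE eqxx.
pose lambda := x ord0 i / c ord0 i.
have yC : x - lambda *: c \in C by rewrite memvB // memvZ.
have yi0 : (x - lambda *: c) ord0 i = 0 by rewrite !mxE divfK // subrr.
have := even_code_pair_vanish hq heven hc hsupp yC yi0.
rewrite !mxE => /eqP; rewrite subr_eq0 => /eqP xj.
by exists lambda; rewrite xj divfK.
Qed.
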